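(* Let $X$ be a set strongly star Hurewicz space. Then the following are equivalent: (1) $X$ is meta-Lindel\''of; (2) $X$ is para-Lindel\''of; (3) $X$ is Lindel\''of.
   Context: For a subset $A$ of a space $X$ and a collection $\mathcal{U}$ of subsets of $X$, ${\rm St}(A,\mathcal{U}) = \bigcup\{U \in \mathcal{U}: U \cap A \neq \emptyset\}$. A space is meta-Lindel\''of if each open cover has a point-countable open refinement, and para-Lindel\''of if each open cover has a locally countable open refinement. $X$ is set strongly star Hurewicz if for each nonempty $A \subset X$ and each sequence $(\mathcal{U}_n: n\in\mathbb{N})$ of collections of sets open in $X$ with $\overline{A} \subset \bigcup\mathcal{U}_n$ for all $n$, there are finite sets $F_n \subset \overline{A}$ such that each $x \in A$ lies in ${\rm St}(F_n,\mathcal{U}_n)$ for all but finitely many $n$. *)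

From HB Require Import structures.
From mathcomp Require Import all_boot all_order all_algebra.
From mathcomp Require Import all_classical all_reals all_analysis.
Set Implicit Arguments. Unset Strict Implicit. Unset Printing Implicit Defensive.
Local Open Scope classical_set_scope.

Definition star {T : Type} (A : set T) (U : set (set T)) : set T :=
  [set x | exists V, U V /\ V `&` A !=set0 /\ V x].

Definition open_cover {T : topologicalType} (U : set (set T)) : Prop :=
  (forall V, U V -> open V) /\ (forall x : T, exists V, U V /\ V x).

Definition open_refinement {T : topologicalType} (V U : set (set T)) : Prop :=
  open_cover V /\ (forall W, V W -> exists W', U W' /\ W `<=` W').

Definition point_countable {T : Type} (V : set (set T)) : Prop :=
  forall x : T, countable [set W | V W /\ W x].

Definition locally_countable {T : topologicalType} (V : set (set T)) : Prop :=
  forall x : T, exists N, nbhs x N /\ countable [set W | V W /\ W `&` N !=set0].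

Definition Lindelof (T : topologicalType) : Prop :=
  forall U : set (set T), open_cover U ->
    exists U', U' `<=` U /\ countable U' /\ (forall x : T, exists V, U' V /\ V x).

Definition meta_Lindelof (T : topologicalType) : Prop :=
  forall U : set (set T), open_cover U ->
    exists V, open_refinement V U /\ point_countable V.

Definition para_Lindelof (T : topologicalType) : Prop :=
  forall U : set (set T), open_cover U ->
    exists V, open_refinement V U /\ locally_countable V.

Definition set_strongly_star_Hurewicz (T : topologicalType) : Prop :=
  forall (A : set T), A !=set0 ->
  forall (U : nat -> set (set T)),
    (forall n V, U n V -> open V) ->
    (forall n, closure A `<=` \bigcup_(V in U n) V) ->
    exists F : nat -> set T,
      (forall n, finite_set (F n) /\ F n `<=` closure A) /\
      (forall x, A x -> exists N, forall n, (N <= n)%N -> star (F n) (U n) x).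

(* Lindelof => para-Lindelof => meta-Lindelof holds in every space: a countable
   subcover is a countable (hence locally countable) open refinement, and a
   locally countable family is point-countable since every point lies in each
   of its neighbourhoods.

   For meta-Lindelof => Lindelof, refine an open cover U to a point-countable
   open cover V.  Applying the set strongly star Hurewicz property to A = X and
   the constant sequence V yields finite sets F_n whose countable union D
   satisfies St(D, V) = X.  By point-countability only countably many members
   of V meet D, and these cover X; choosing for each of them a member of U
   containing it gives a countable subcover of U. *)

From mathcomp Require Import all_boot all_order all_algebra.
From mathcomp Require Import all_classical all_reals all_analysis.
Local Open Scope classical_set_scope.

Definition countable_subcover {T : Type} (U : set (set T)) : Prop :=
  exists U', U' `<=` U /\ countable U' /\ (forall x : T, exists V, U' V /\ V x).

Section Refinements.
Variable T : topologicalType.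

Lemma subcover_open_refinement (U U' : set (set T)) :
  (forall V, U V -> open V) -> U' `<=` U -> (forall x : T, exists V, U' V /\ V x) ->
  open_refinement U' U.
Proof.
move=> Uo sU' cov; split; first by split => // V /sU'; exact: Uo.
by move=> W U'W; exists W; split => //; exact: sU'.
Qed.

Lemma countable_locally_countable (V : set (set T)) :
  countable V -> locally_countable V.
Proof.
move=> cV x; exists setT; split; first exact: filterT.
by apply: sub_countable cV; apply: subset_card_le => W [].
Qed.

Lemma locally_countable_point_countable (V : set (set T)) :
  locally_countable V -> point_countable V.
Proof.
move=> lV x; have [N [Nx cN]] := lV x.
apply: sub_countable cN; apply: subset_card_le => W [VW Wx]; split => //.
by exists x; split => //; exact: nbhs_singleton.
Qed.

Lemma refinement_countable_subcover (U V : set (set T)) :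
  open_refinement V U -> countable_subcover V -> countable_subcover U.
Proof.
move=> [_ VrU] [V' [sV' [cV' covV']]].
have /boolp.choice [g gP] : forall W, exists W', V W -> U W' /\ W `<=` W'.
  move=> W; have [VW|nVW] := pselect (V W); last by exists W => /nVW.
  by have [W' ?] := VrU W VW; exists W'.
exists (g @` V'); split; last split.
- by move=> _ [W V'W <-]; exact: (gP W (sV' W V'W)).1.
- exact: sub_countable (card_image_le _ _) cV'.
- move=> x; have [W [V'W Wx]] := covV' x.
  exists (g W); split; first by exists W.
  exact: (gP W (sV' W V'W)).2.
Qed.

End Refinements.

(* Take A = X, U_n = V and
   let D be the union of the resulting finite sets F_n. *)
Lemma sssH_countable_star_kernel {T : topologicalType} {V : set (set T)} :
  set_strongly_star_Hurewicz T -> open_cover V ->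
  exists D : set T, countable D /\ forall x, star D V x.
Proof.
move=> sssH [Vo Vc].
have [[x0 _]|noT] := pselect (exists x : T, True); last first.
  by exists set0; split => [|x]; [exact: countable0 | case: noT; exists x].
have closure_cov (n : nat) : closure [set: T] `<=` \bigcup_(W in V) W.
  by move=> x _; have [W [VW Wx]] := Vc x; exists W.
have [F [Ffin Fstar]] :=
  sssH setT (ex_intro _ x0 I) (fun _ => V) (fun _ => Vo) closure_cov.
exists (\bigcup_(n in setT) F n); split.
  apply: bigcup_countable; first exact: countableP.
  by move=> n _; exact: finite_set_countable (Ffin n).1.
move=> x; have [N FNstar] := Fstar x I.
have [W [VW [[y [Wy FNy]] Wx]]] := FNstar N (leqnn N).
by exists W; split => //; split => //; exists y; split => //; exists N.
Qed.

Lemma point_countable_meeting (T : Type) (V : set (set T)) (D : set T) :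
  point_countable V -> countable D -> countable [set W | V W /\ W `&` D !=set0].
Proof.
move=> pV cD.
apply: (@sub_countable _ _ _ (\bigcup_(y in D) [set W | V W /\ W y])).
  by apply: subset_card_le => W [VW [y [Wy Dy]]]; exists y.
by apply: bigcup_countable => // y _; exact: pV.
Qed.

Lemma sssH_meta_Lindelof_Lindelof {T : topologicalType} :
  set_strongly_star_Hurewicz T -> meta_Lindelof T -> Lindelof T.
Proof.
move=> sssH metaL U coverU.
have [V [VrU pV]] := metaL U coverU.
have [D [cD starD]] := sssH_countable_star_kernel sssH VrU.1.
apply: refinement_countable_subcover VrU _.
exists [set W | V W /\ W `&` D !=set0]; split; first by move=> W [].
split; first exact: point_countable_meeting.
by move=> x; have [W [VW [WD Wx]]] := starD x; exists W.
Qed.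

Lemma Lindelof_para_Lindelof (T : topologicalType) :
  Lindelof T -> para_Lindelof T.
Proof.
move=> L U [Uo Uc]; have [U' [sU' [cU' cov]]] := L U (conj Uo Uc).
exists U'; split; first exact: subcover_open_refinement.
exact: countable_locally_countable.
Qed.

Lemma para_Lindelof_meta_Lindelof (T : topologicalType) :
  para_Lindelof T -> meta_Lindelof T.
Proof.
move=> paraL U coverU; have [V [VrU lV]] := paraL U coverU.
by exists V; split => //; exact: locally_countable_point_countable.
Qed.

Theorem mainTheorem4 (T : topologicalType) :
  set_strongly_star_Hurewicz T ->
  (meta_Lindelof T <-> para_Lindelof T) /\ (para_Lindelof T <-> Lindelof T).
Proof.
move=> sssH.
have ML := sssH_meta_Lindelof_Lindelof sssH.
have LP := @Lindelof_para_Lindelof T.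
have PM := @para_Lindelof_meta_Lindelof T.
split; split.
- by move=> metaL; apply: LP; exact: ML.
- exact: PM.
- by move=> paraL; apply: ML; exact: PM.
- exact: LP.
Qed.
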